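(* In the setting of the context, under condition (A1) the family $\{a_{v,\sigma}\}_{v\in\mathcal{V}_L^W}$ is connected: for any $v,v'\in\mathcal{V}_L^W$ there is a sequence $v=v_0,v_1,\dots,v_k=v'$ of white vertices such that for each $j$, $a_{v_{j-1},\sigma}$ and $a_{v_j,\sigma}$ are directly connected, meaning there is a vertex $u$ with $\{c^\dagger_{u,\sigma},a_{v_{j-1},\sigma}\}\ne0$ and $\{c^\dagger_{u,\sigma},a_{v_j,\sigma}\}\neq 0$.
   Context: Construction. Let $G_l=(V_l,E_l)$, $l=1,\dots,L$, be complete graphs with $|V_l|\ge 2$. In each $V_l$ one vertex $v_l^0$ is painted black, the others white. Set $\mathcal{G}_1=G_1$. For $l=2,\dots,L$: choose an integer $z_l$ with $0<z_l\le |V_l|-1$, choose $z_l$ white vertices of $V_l$ and identify each with a vertex (black or white; distinct with distinct) of $\mathcal{V}_{l-1}$; $\mathcal{V}_l=\mathcal{V}_{l-1}\cup V_l$ with these identifications and $\mathcal{E}_l=\mathcal{E}_{l-1}\cup E_l$. A white vertex identified with a black one becomes black; two identified white vertices stay white; $v_l^0$ is never identified with an earlier vertex. $\mathcal{V}_l^W$ denotes the white vertices of $\mathcal{G}_l$. Directed edges: $\vec{\mathcal{E}}_L=\bigcup_l\{(v,v_l^0):v\in V_l\setminus\{v_l^0\}\}$; directed paths (including the trivial path $(v)$), reachable set $R(v)$, number $N(v\to u)$ of directed paths from $v$ to $u$, and $|(v\to u)_j|$ the number of vertices on the $j$-th path. Condition (A1): for every $l\in\{2,\dots,L\}$ with $z_l\neq|V_l|-1$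 there exists $v\in\mathcal{V}_{l-1}^W$ with $N(v\to v_l^0)$ odd. Fermions $c_{v,\sigma}$ with canonical anticommutation relations; for white $v$, $a_{v,\sigma}=\sum_{u\in R(v)}\big(\sum_{j=1}^{N(v\to u)}(-1)^{|(v\to u)_j|-1}\big)c_{u,\sigma}$. *)

From mathcomp Require Import all_boot all_order all_algebra all_field.
Unset Strict Implicit. Unset Printing Implicit Defensive.
Import Order.TTheory GRing.Theory Num.Theory.
Local Open Scope ring_scope.

(* Encoding of the construction (layers indexed 0..L-1 instead of 1..L):
   - V is the final vertex set \mathcal V_L;
   - layer l is the complete graph on 'I_(k l).+2 (so |V_l| = k l + 2 >= 2),
     embedded into V by phi l; the black vertex v_l^0 is index ord0;
   - identifications are recorded by phi: a vertex of V_l is identified with an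
     earlier vertex iff its image lies in the image of an earlier layer. *)
Section Graph.
Variables (L : nat) (k : 'I_L -> nat) (V : finType)
          (phi : forall l : 'I_L, 'I_(k l).+2 -> V).
Set Implicit Arguments.

Definition in_layer (l : 'I_L) (x : V) : bool := [exists i, phi l i == x].
Definition earlier (l : 'I_L) (x : V) : bool :=
  [exists m : 'I_L, (m < l)%N && in_layer m x].
Definition black_before (l : 'I_L) (x : V) : bool :=
  [exists m : 'I_L, (m < l)%N && (phi m ord0 == x)].
Definition white (x : V) : bool := ~~ [exists l, phi l ord0 == x].
Definition z (l : 'I_L) : nat := #|[set i : 'I_(k l).+2 | earlier l (phi l i)]|.

Definition construction : Prop :=
  (forall l, injective (phi l)) /\
  (forall x, exists l, in_layer l x) /\
  (forall l : 'I_L, (0 < l)%N ->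
     [/\ (0 < z l)%N, (z l <= (k l).+1)%N & ~~ earlier l (phi l ord0)]).

Definition dedge (x y : V) : bool :=
  [exists l, exists i : 'I_(k l).+2,
     [&& i != ord0, phi l i == x & phi l ord0 == y]].

(* number of directed paths v -> u with j edges (j+1 vertices) *)
Definition npaths_len (v u : V) (j : nat) : nat :=
  #|[set s : j.-tuple V | path dedge v s && (last v s == u)]|.
(* the graph is acyclic, so every directed path has fewer than #|V| edges *)
Definition npaths (v u : V) : nat := \sum_(j < #|V|) npaths_len v u j.
Definition reach (v u : V) : bool := (0 < npaths v u)%N.
(* \sum_j (-1)^(|(v->u)_j| - 1) *)
Definition coef (v u : V) : int :=
  \sum_(j < #|V|) (-1) ^+ j * (npaths_len v u j)%:Z.

Definition A1 : Prop :=
  forall l : 'I_L, (0 < l)%N -> z l != (k l).+1 ->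
    exists v, [&& earlier l v, ~~ black_before l v & odd (npaths v (phi l ord0))].

(* Fermions: an abstract complex algebra with c_{u,s}, c^dag_{u,s} obeying the CAR *)
Definition anticomm (A : nzRingType) (x y : A) : A := x * y + y * x.

Definition CAR (A : lalgType algC) (c cdag : V -> bool -> A) : Prop :=
  [/\ forall u w s t, anticomm (cdag u s) (c w t) = ((u == w) && (s == t))%:R,
      forall u w s t, anticomm (c u s) (c w t) = 0
    & forall u w s t, anticomm (cdag u s) (cdag w t) = 0].

Definition aop (A : lalgType algC) (c : V -> bool -> A) (v : V) (s : bool) : A :=
  \sum_(u | reach v u) ((coef v u)%:~R : algC) *: c u s.

Definition dconn (A : lalgType algC) (c cdag : V -> bool -> A) (s : bool) (v w : V) : bool :=
  [exists u : V, (anticomm (cdag u s) (aop c v s) != 0)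
                 && (anticomm (cdag u s) (aop c w s) != 0)].

End Graph.

From mathcomp Require Import all_boot all_order all_algebra all_field.
From mathcomp Require Import zify.
Local Open Scope ring_scope.
Import GRing.Theory Num.Theory.

(* Fermionic part: by the CAR, {c^dag_{u,s}, a_{w,s}} is the scalar coef w u
   when u is reachable from w, and coef w u has the parity of the number of
   directed paths from w to u.  Hence two white vertices with an odd number
   of paths to a common vertex u are directly connected (via u).

   Combinatorial part: a white vertex x of V_l that is not identified with an
   earlier vertex has exactly one directed path to v_l^0, namely the edge
   (x, v_l^0), because every path leaving a black vertex only climbs to
   strictly later black vertices.  So x is directly connected to every vertex
   with an odd number of paths to v_l^0: for l = 0 to a fixed white root r of
   V_0, and for l > 0 to the earlier white vertex given by (A1).  By strong
   induction on the layer every white vertex is linked to r by a chain of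
   white vertices; chains reverse since direct connection is symmetric. *)

Lemma alt_sum_congr_mod2 (m : nat) (n : nat -> nat) :
  (2 %| \sum_(j < m) (-1) ^+ j * (n j)%:Z - (\sum_(j < m) n j)%:Z)%Z.
Proof.
rewrite -[X in _ - X]natz natr_sum -sumrB; apply: rpred_sum => j _.
rewrite -signr_odd natz; case: (odd j); rewrite ?expr0 ?mul1r ?subrr ?dvdz0 //.
by rewrite expr1 mulN1r -opprD rpredN -PoszD addnn -muln2 dvdzE dvdn_mull.
Qed.

Section Linked.
Variables (T : eqType) (P : pred T) (e : rel T).
Local Set Implicit Arguments.
Local Unset Strict Implicit.

Definition linked (x y : T) : Prop :=
  exists s : seq T, [&& all P s, path e x s & last x s == y].

Lemma linked_step (x y : T) : P y -> e x y -> linked x y.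
Proof. by move=> Py exy; exists [:: y]; rewrite /= Py exy eqxx. Qed.

Lemma linked_trans (x y z : T) : linked x y -> linked y z -> linked x z.
Proof.
move=> [s1 /and3P [P1 p1 /eqP l1]] [s2 /and3P [P2 p2 l2]]; exists (s1 ++ s2).
by rewrite all_cat P1 P2 cat_path p1 l1 p2 last_cat l1 l2.
Qed.

Lemma linked_sym (x y : T) : symmetric e -> P x -> linked x y -> linked y x.
Proof.
move=> e_sym Px [s /and3P [Ps ps /eqP <-]]; exists (rev (belast x s)).
rewrite rev_path (eq_path (e' := e)) // ps /=.
case: s Ps {ps} => [|x1 s] Ps /=; first by rewrite eqxx.
rewrite rev_cons last_rcons eqxx andbT all_rcons Px all_rev /=.
by apply/allP => z /mem_belast; apply: (allP Ps).
Qed.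
End Linked.

Section Construction.
Variables (L : nat) (k : 'I_L -> nat) (V : finType)
          (phi : forall l : 'I_L, 'I_(k l).+2 -> V).
Local Set Implicit Arguments.
Local Unset Strict Implicit.

Lemma coef_neq0 (v u : V) : odd (npaths phi v u) -> coef phi v u != 0.
Proof.
move=> odd_n; have := alt_sum_congr_mod2 #|V| (npaths_len phi v u).
apply: contraTneq => c0.
by rewrite -/(coef phi v u) c0 sub0r rpredN dvdzE dvdn2 odd_n.
Qed.

Section Fermions.
Variables (A : lalgType algC) (c cdag : V -> bool -> A).
Hypothesis one_neq0 : (1 : A) != 0.
Hypothesis car : CAR c cdag.

Lemma anticomm_cdag_aop (u w : V) (s : bool) :
  anticomm (cdag u s) (aop phi c w s) =
  (if reach phi w u then coef phi w u else 0)%:~R.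
Proof.
have [car_cdag_c _ _] := car.
rewrite /anticomm /aop mulr_sumr mulr_suml -big_split /=.
rewrite (eq_bigr (fun x => ((u == x)%:R : A) *~ coef phi w x)); last first.
  move=> x _; rewrite scaler_int mulrzAr mulrzAl -mulrzDl.
  by rewrite -[_ + _]/(anticomm _ _) car_cdag_c eqxx andbT.
rewrite big_mkcond (bigD1 u) //= big1 ?addr0; last first.
  by move=> x /negbTE ux; rewrite eq_sym ux; case: ifP; rewrite ?mul0rz.
by rewrite eqxx mulr1n; case: ifP.
Qed.

Lemma dconn_odd (s : bool) (x y u : V) :
  odd (npaths phi x u) -> odd (npaths phi y u) -> dconn phi c cdag s x y.
Proof.
move=> odd_x odd_y; apply/existsP; exists u.
rewrite !anticomm_cdag_aop /reach !odd_gt0 //.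
rewrite -!(@scaler_int algC A) !scaler_eq0 !intr_eq0 !negb_or.
by rewrite !coef_neq0 // one_neq0.
Qed.

Lemma dconn_sym (s : bool) : symmetric (dconn phi c cdag s).
Proof.
by move=> x y; apply/existsP/existsP => -[u /andP [hx hy]]; exists u; rewrite hx hy.
Qed.
End Fermions.

Section Layers.
Hypothesis phi_inj : forall l : 'I_L, injective (phi l).
Hypothesis black_new : forall l : 'I_L, (0 < l)%N -> ~~ earlier phi l (phi l ord0).

Lemma earlierW (m n : 'I_L) (i : 'I_(k m).+2) :
  (m < n)%N -> earlier phi n (phi m i).
Proof. by move=> mn; apply/existsP; exists m; rewrite mn; apply/existsP; exists i. Qed.

Lemma black_inj (m n : 'I_L) : phi m ord0 = phi n ord0 -> m = n.
Proof.
move=> e; case: (ltngtP m n) => [mn|nm|/val_inj //].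
- by move: (black_new (leq_ltn_trans (leq0n m) mn)); rewrite -e earlierW.
- by move: (black_new (leq_ltn_trans (leq0n n) nm)); rewrite e earlierW.
Qed.

Lemma dedge_from_new (l : 'I_L) (x y : V) : ~~ earlier phi l x -> dedge phi x y ->
  exists2 n : 'I_L, y = phi n ord0 & (l <= n)%N.
Proof.
move=> x_new /existsP [n /existsP [i /and3P [_ /eqP ex /eqP <-]]].
by exists n => //; rewrite leqNgt; apply: contra x_new; rewrite -ex; apply: earlierW.
Qed.

Lemma dedge_from_black (m : 'I_L) (y : V) : dedge phi (phi m ord0) y ->
  exists2 n : 'I_L, y = phi n ord0 & (m < n)%N.
Proof.
move=> /existsP [n /existsP [i /and3P [i0 /eqP e /eqP <-]]].
exists n; rewrite // ltn_neqAle; apply/andP; split.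
  by apply: contraNneq i0 => /val_inj mn; subst n; rewrite (phi_inj e).
rewrite leqNgt; apply/negP => nm.
by move: (black_new (leq_ltn_trans (leq0n n) nm)); rewrite -e earlierW.
Qed.

Lemma path_from_black (m : 'I_L) (s : seq V) :
  path (dedge phi) (phi m ord0) s -> s != [::] ->
  exists2 n : 'I_L, last (phi m ord0) s = phi n ord0 & (m < n)%N.
Proof.
elim: s m => [|y s IH] m //= /andP [e_my p_ys] _.
have [n1 ey mn1] := dedge_from_black e_my; subst y.
case: s IH p_ys => [|y2 s] IH p_ys; first by exists n1.
have [n -> n1n] := IH n1 p_ys isT.
by exists n; last exact: ltn_trans mn1 n1n.
Qed.

(* From a new non-black vertex of V_l the only directed path to v_l^0 is the
   single edge: the empty path does not reach v_l^0, and a longer path would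
   return to v_l^0 from a strictly later black vertex. *)
Lemma npaths_len_new (l : 'I_L) (i : 'I_(k l).+2) (j : nat) :
  i != ord0 -> ~~ earlier phi l (phi l i) ->
  npaths_len phi (phi l i) (phi l ord0) j = (j == 1)%N.
Proof.
move=> i0 i_new; have x_nonblack : phi l i != phi l ord0.
  by apply: contra i0 => /eqP /phi_inj ->.
rewrite /npaths_len; case: j => [|[|j]].
- apply/eqP; rewrite cards_eq0; apply/eqP/setP => -[[|//] Hs].
  by rewrite !inE /= (negbTE x_nonblack).
- apply/eqP; rewrite (_ : [set s | _] = [set [tuple phi l ord0]]) ?cards1 //.
  apply/setP => -[s]; case: s => [|y [|//]] //= Hs; rewrite !inE /= andbT.
  rewrite -val_eqE /= eqseq_cons andbT andbC; case: eqP => //= ->.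
  by apply/existsP; exists l; apply/existsP; exists i; rewrite i0 !eqxx.
- apply/eqP; rewrite cards_eq0; apply/eqP/setP => -[s].
  case: s => [|y [|y2 s]] //= Hs; rewrite !inE /=.
  apply/negP => /andP [/andP [e_xy p2] /eqP last_s].
  have [n1 ey ln1] := dedge_from_new i_new e_xy; subst y.
  have [n /= last_n n1n] := path_from_black (s := y2 :: s) p2 isT.
  move: last_s; rewrite last_n => /black_inj nl; subst n.
  by move: n1n; rewrite ltnNge ln1.
Qed.

Lemma npaths_new (l : 'I_L) (i : 'I_(k l).+2) :
  i != ord0 -> ~~ earlier phi l (phi l i) ->
  npaths phi (phi l i) (phi l ord0) = 1%N.
Proof.
move=> i0 i_new; have hV : (1 < #|V|)%N.
  apply: leq_trans (max_card [set phi l i; phi l ord0]).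
  by rewrite cards2 ltnS lt0b; apply: contra i0 => /eqP /phi_inj ->.
rewrite /npaths (bigD1 (Ordinal hV)) //= big1 => [|j j1].
  by rewrite npaths_len_new.
by rewrite npaths_len_new // -(inj_eq val_inj) in j1 *; rewrite (negbTE j1).
Qed.

Lemma white_new (l : 'I_L) (i : 'I_(k l).+2) :
  i != ord0 -> ~~ earlier phi l (phi l i) -> white phi (phi l i).
Proof.
move=> i0 i_new; apply/existsP => -[m /eqP e].
case: (ltngtP m l) => [ml|lm|/val_inj ml].
- by move: i_new; rewrite -e earlierW.
- by move: (black_new (leq_ltn_trans (leq0n l) lm)); rewrite e earlierW.
- by subst m; move: i0; rewrite (phi_inj e) eqxx.
Qed.

(* A vertex white in \mathcal G_{l-1} stays white, since later black vertices
   are new. *)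
Lemma white_earlier (l : 'I_L) (x : V) : (0 < l)%N ->
  earlier phi l x -> ~~ black_before phi l x -> white phi x.
Proof.
move=> l0 /existsP [m /andP [ml /existsP [i /eqP <-]]] not_black.
apply/existsP => -[n /eqP e].
case: (ltngtP n l) => [nl|ln|/val_inj nl].
- by case/negP: not_black; apply/existsP; exists n; rewrite nl e; apply/eqP.
- move: (black_new (leq_ltn_trans (leq0n l) ln)).
  by rewrite e earlierW // (ltn_trans ml ln).
- by subst n; move: (black_new l0); rewrite e earlierW.
Qed.

Lemma z_not_full (l : 'I_L) (i : 'I_(k l).+2) : (0 < l)%N ->
  i != ord0 -> ~~ earlier phi l (phi l i) -> z phi l != (k l).+1.
Proof.
move=> l0 i0 i_new.
have sub : [set j | earlier phi l (phi l j)] \subset ~: [set ord0; i].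
  apply/subsetP => j; rewrite !inE; apply: contraL => /orP [] /eqP ->//.
  exact: black_new l0.
have := subset_leq_card sub.
rewrite (cardsCs (~: _)) setCK cards2 eq_sym i0 card_ord /z.
by move=> h; apply/eqP => e; rewrite e in h; lia.
Qed.

Section Connectivity.
Variables (A : lalgType algC) (c cdag : V -> bool -> A) (sigma : bool).
Hypothesis one_neq0 : (1 : A) != 0.
Hypothesis car : CAR c cdag.
Hypothesis hA1 : A1 phi.

Local Notation wlinked := (linked (white phi) (dconn phi c cdag sigma)).

(* Every white vertex is linked to the root r = phi l0 1 of the first layer,
   by strong induction on its layer: an old vertex is covered by induction; a
   new one is directly connected through v_l^0 to r (l = 0) or to the white
   vertex of an earlier layer supplied by (A1). *)
Lemma wlinked_root (l0 : 'I_L) : l0 = 0%N :> nat ->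
  forall (l : 'I_L) (x : V), white phi x -> in_layer phi l x ->
  wlinked x (phi l0 (inord 1)).
Proof.
move=> l0_0; have first_new x : ~~ earlier phi l0 x.
  by apply/existsP => -[m /andP []]; rewrite l0_0.
have r1 : (inord 1 : 'I_(k l0).+2) != ord0 by rewrite -(inj_eq val_inj) /= inordK.
suff IH n (l : 'I_L) : l = n :> nat -> forall x, white phi x -> in_layer phi l x ->
  wlinked x (phi l0 (inord 1)) by move=> l; exact: IH.
elim/ltn_ind: n l => n IH l ln x wx /existsP [i /eqP ex].
case x_old: (earlier phi l x).
  case/existsP: x_old => m /andP [ml x_m].
  by apply: (IH m _ m erefl x wx x_m); rewrite -ln.
subst x; have i_new : ~~ earlier phi l (phi l i) by rewrite x_old.
have i0 : i != ord0 by apply: contra wx => /eqP ->; apply/existsP; exists l.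
have odd_x : odd (npaths phi (phi l i) (phi l ord0)) by rewrite npaths_new.
case: (posnP l) => [l_0|l_pos].
  have l0_l : l0 = l by apply: ord_inj; rewrite l_0 l0_0.
  subst l0.
  apply: linked_step; first exact: white_new r1 (first_new _).
  apply: (dconn_odd one_neq0 car _ odd_x).
  by rewrite npaths_new ?first_new.
have [w /and3P [w_old w_nb w_odd]] := hA1 l_pos (z_not_full l_pos i0 i_new).
have ww := white_earlier l_pos w_old w_nb.
case/existsP: w_old => m /andP [ml w_m].
apply: linked_trans (IH m _ m erefl w ww w_m); last by rewrite -ln.
exact: linked_step ww (dconn_odd one_neq0 car _ odd_x w_odd).
Qed.
End Connectivity.
End Layers.
End Construction.

Theorem mainTheorem6 (L : nat) (k : 'I_L -> nat) (V : finType)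
    (phi : forall l : 'I_L, 'I_(k l).+2 -> V)
    (A : lalgType algC) (c cdag : V -> bool -> A) :
  construction phi -> A1 phi -> (1 : A) != 0 -> CAR c cdag ->
  forall (sigma : bool) (v v' : V), white phi v -> white phi v' ->
  exists s : seq V,
    [&& all (white phi) s, path (dconn phi c cdag sigma) v s & last v s == v'].
Proof.
move=> [phi_inj [cover layer_cond]] hA1 one_neq0 car sigma v v' wv wv'.
have black_new (l : 'I_L) : (0 < l)%N -> ~~ earlier phi l (phi l ord0).
  by move=> /layer_cond [].
have [lv v_lv] := cover v; have [lv' v'_lv'] := cover v'.
pose l0 : 'I_L := Ordinal (leq_ltn_trans (leq0n lv) (ltn_ord lv)).
have to_root := wlinked_root phi_inj black_new sigma one_neq0 car hA1 (l0 := l0) erefl.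
apply: linked_trans (to_root _ _ wv v_lv) _.
exact: linked_sym (dconn_sym phi c cdag sigma) wv' (to_root _ _ wv' v'_lv').
Qed.
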